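(* Let $d\geq 4$ be an integer and let $\mathcal{X}\subset\mathbb{R}^{d+1}$ be the set of all vectors obtained by permuting the coordinates of $(1,1,-1,0,\dots,0)^T\in\mathbb{R}^{d+1}$. Then $\mathcal{X}$ lies in the affine hyperplane $\{x\in\mathbb{R}^{d+1}\colon x_1+\dots+x_{d+1}=1\}$ (which is isometric to $\mathbb{R}^d$), and, viewed as a subset of $\mathbb{R}^d$ via this isometry, $\mathcal{X}$ is a $5$-distance set with exactly $(d-1)\binom{d+1}{2}$ elements.
   Context: For a finite set $\mathcal{X}$ of distinct vectors in a Euclidean space, $\mathcal{X}$ is called an $s$-distance set if the set of Euclidean distances between distinct elements of $\mathcal{X}$ has exactly $s$ elements. *)

From HB Require Import structures.
From mathcomp Require Import all_boot all_order fingroup perm all_algebra.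
From mathcomp Require Import reals.
Set Implicit Arguments. Unset Strict Implicit. Unset Printing Implicit Defensive.
Import Order.TTheory GRing.Theory Num.Theory.
Local Open Scope ring_scope.

Definition edist (R : realType) (n : nat) (x y : 'rV[R]_n) : R :=
  Num.sqrt (\sum_(i < n) (x 0 i - y 0 i) ^+ 2).

Definition base_vec (R : realType) (d : nat) : 'rV[R]_(d.+1) :=
  \row_(i < d.+1)
    (if (i : nat) == 0%N then 1
     else if (i : nat) == 1%N then 1
     else if (i : nat) == 2%N then -1 else 0).

Definition Xvecs (R : realType) (d : nat) : seq 'rV[R]_(d.+1) :=
  undup [seq col_perm s (base_vec R d) | s <- enum [set: 'S_(d.+1)]].

Definition dist_set (R : realType) (n : nat) (X : seq 'rV[R]_n) : seq R :=
  undup [seq edist p.1 p.2 | p <- [seq (x, y) | x <- X, y <- X] & p.1 != p.2].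

From HB Require Import structures.
From mathcomp Require Import all_boot all_order fingroup perm all_algebra.
From mathcomp Require Import action primitive_action alt.
From mathcomp Require Import reals ring lra zify.
Import Order.TTheory GRing.Theory Num.Theory.
Local Open Scope ring_scope.
Set Implicit Arguments. Unset Strict Implicit. Unset Printing Implicit Defensive.

(* The permutations of (1,1,-1,0,...,0) are exactly the vectors 1_A - e_c with
   A a 2-subset of the coordinates and c a coordinate outside A, and (A, c) is
   determined by the vector; this gives the count and the coordinate sum 1.
   All these vectors have squared norm 3, and the inner product of 1_A - e_c
   and 1_B - e_e is the integer |A :&: B| - [e \in A] - [c \in B] + [c == e],
   which lies in [-2, 2] for distinct vectors and takes each of these values
   once there are at least five coordinates.  The squared distances are thus
   6 - 2k with k in [-2, 2]. *)

Lemma perm_of_uniq_tuples (T : finType) n (t u : n.-tuple T) :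
  uniq t -> uniq u -> exists s : {perm T}, map s t = u.
Proof.
move=> t_uniq u_uniq.
have le_nT : (n <= #|T|)%N by rewrite -(size_tuple t) -(card_uniqP t_uniq) max_card.
have dtuple_onT (v : n.-tuple T) : uniq v -> v \in n.-dtuple(setT).
  by move=> v_uniq; rewrite inE v_uniq; apply/subsetP => x; rewrite inE.
have Sym_ntrans := ntransitive_weak le_nT (Sym_trans T).
have [s _ ->] := atransP2 Sym_ntrans (dtuple_onT t t_uniq) (dtuple_onT u u_uniq).
by exists s.
Qed.

Lemma sum_indicator (R : nzSemiRingType) (T : finType) (A : {pred T}) :
  \sum_(j : T) ((j \in A)%:R : R) = #|A|%:R.
Proof.
rewrite -sum1_card natr_sum [RHS]big_mkcond.
by apply: eq_bigr => j _; case: (j \in A).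
Qed.

Lemma sum_indicatorM (R : nzSemiRingType) (T : finType) (A B : {set T}) :
  \sum_(j : T) ((j \in A)%:R * (j \in B)%:R : R) = #|A :&: B|%:R.
Proof.
by rewrite -sum_indicator; apply: eq_bigr => j _; rewrite -natrM mulnb in_setI.
Qed.

Lemma sum_indicator1 (R : nzSemiRingType) (T : finType) (e : T) :
  \sum_(j : T) ((j == e)%:R : R) = 1.
Proof. by rewrite (sum_indicator _ (pred1 e)) card1. Qed.

Lemma eq_inord n (i : 'I_n.+1) k : (k <= n)%N -> (i == inord k) = (i == k :> nat).
Proof. by move=> le_kn; rewrite -val_eqE /= inordK. Qed.

Lemma inord_eq_inord n k l : (k <= n)%N -> (l <= n)%N ->
  (inord k == inord l :> 'I_n.+1) = (k == l).
Proof. by move=> le_kn le_ln; rewrite eq_inord ?inordK. Qed.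

Lemma sum_mul_indicator1 (R : nzSemiRingType) (T : finType) (F : T -> R) e :
  \sum_(j : T) F j * (j == e)%:R = F e.
Proof.
rewrite (bigD1 e) //= eqxx mulr1 big1 ?addr0 // => j /negbTE->.
by rewrite mulr0.
Qed.

Lemma card_set2I (T : finType) (a b : T) (B : {set T}) : a != b ->
  #|[set a; b] :&: B| = ((a \in B) + (b \in B))%N.
Proof.
move=> ab; set s := [seq x <- [:: a; b] | x \in B].
have s_uniq : uniq s by rewrite filter_uniq //= inE andbT.
have -> : #|[set a; b] :&: B| = #|s|.
  by apply: eq_card => x; rewrite !inE mem_filter !inE andbC.
by rewrite (card_uniqP s_uniq) size_filter /= addn0.
Qed.

Lemma dist_setP (R : realType) n (X : seq 'rV[R]_n) z :
  reflect (exists x y, [/\ x \in X, y \in X, x != y & z = edist x y])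
          (z \in dist_set X).
Proof.
rewrite mem_undup; apply: (iffP mapP) => [[[x y]] | [x [y [xX yX xy ->]]]].
  rewrite mem_filter andbC /=.
  by move=> /andP[/allpairsP[[x' y'] /= [xX yX [-> ->]]] xy] ->; exists x', y'.
by exists (pair x y); rewrite // mem_filter xy; apply: allpairs_f.
Qed.

Section PairVectors.

Variable n : nat.
Implicit Types p q : {set 'I_n} * 'I_n.

Definition Xpairs := [set p : {set 'I_n} * 'I_n | (#|p.1| == 2) && (p.2 \notin p.1)].

Lemma card_Xpairs : #|Xpairs| = ('C(n, 2) * (n - 2))%N.
Proof.
rewrite -sum1dep_card -(pair_big_dep (fun A : {set 'I_n} => #|A| == 2)
  (fun A c => c \notin A) (fun _ _ => 1%N)) /=.
rewrite (eq_bigr (fun _ => n - 2)%N) => [|A /eqP A2].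
  by rewrite sum_nat_cond_const card_draws card_ord.
rewrite sum1dep_card -/(setC A).
by move: (cardsC A); rewrite A2 card_ord => /(canRL (addKn 2)).
Qed.

Definition xdot p q : int :=
  #|p.1 :&: q.1|%:Z - (q.2 \in p.1)%:Z - (p.2 \in q.1)%:Z + (p.2 == q.2)%:Z.

Lemma xdot_diag p : p \in Xpairs -> xdot p p = 3.
Proof. by rewrite inE /xdot setIid => /andP[/eqP-> /negbTE->]; rewrite eqxx. Qed.

Lemma xdot_ge p q : -2 <= xdot p q.
Proof. rewrite /xdot; lia. Qed.

Lemma xdot_le p q : p \in Xpairs -> q \in Xpairs -> p != q -> xdot p q <= 2.
Proof.
case: p q => [A c] [B e]; rewrite !inE /xdot /= => /andP[/eqP A2 cA] /andP[/eqP B2 eB].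
have [eqAB|AB] := eqVneq A B.
  by subst B; rewrite xpair_eqE eqxx (negbTE cA) (negbTE eB) setIid A2 /= => /negbTE->.
set m := #|A :&: B|; have m_le1 : (m <= 1)%N.
  rewrite leqNgt; apply: contra AB => m_gt1.
  have /eqP {1}<- : A :&: B == A by rewrite eqEcard subsetIl A2.
  by rewrite eqEcard subsetIr B2.
by move=> _; lia.
Qed.

Definition xdot_values : seq int := [:: -2; -1; 0; 1; 2].

Lemma xdot_mem_values p q : p \in Xpairs -> q \in Xpairs -> p != q ->
  xdot p q \in xdot_values.
Proof.
move=> pX qX neq_pq; have := xdot_le pX qX neq_pq; have := xdot_ge p q.
by rewrite !inE; lia.
Qed.

Variable R : realType.

Definition xvec p : 'rV[R]_n := \row_j ((j \in p.1)%:R - (j == p.2)%:R).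

Lemma sum_xvec p : \sum_j xvec p 0 j = #|p.1|%:R - 1.
Proof.
by under eq_bigr do rewrite mxE; rewrite sumrB sum_indicator sum_indicator1.
Qed.

Lemma dot_xvec p q : \sum_j xvec p 0 j * xvec q 0 j = (xdot p q)%:~R.
Proof.
case: p q => [A c] [B e]; under eq_bigr do rewrite !mxE /= mulrBl !mulrBr.
rewrite !sumrB !sum_mul_indicator1 sum_indicatorM.
rewrite (eq_bigr (fun j => (j \in B)%:R * (j == c)%:R)) => [|j _]; last exact: mulrC.
rewrite sum_mul_indicator1 /xdot /= !intrD !intrN -!pmulrn eq_sym.
ring.
Qed.

Lemma edist_xvec p q : p \in Xpairs -> q \in Xpairs ->
  edist (xvec p) (xvec q) = Num.sqrt (6 - 2 * (xdot p q)%:~R).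
Proof.
move=> pX qX; congr Num.sqrt.
have norm_xvec r : r \in Xpairs -> \sum_j xvec r 0 j ^+ 2 = 3.
  by move=> rX; under eq_bigr do rewrite expr2; rewrite dot_xvec xdot_diag.
under eq_bigr do rewrite sqrrB.
by rewrite !big_split /= sumrN sumrMnl !norm_xvec // dot_xvec; ring.
Qed.

Lemma xvec_inj : {in Xpairs &, injective xvec}.
Proof.
move=> p q pX qX eq_pq; apply/eqP; apply: contraT => /(xdot_le pX qX).
have /intr_inj <- : (xdot q q)%:~R = (xdot p q)%:~R :> R by rewrite -!dot_xvec eq_pq.
by rewrite xdot_diag.
Qed.

End PairVectors.

Section BaseVectorOrbit.

Variables (R : realType) (d : nat).
Hypothesis d_ge2 : (2 <= d)%N.
Let d_ge1 : (1 <= d)%N := ltnW d_ge2.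

Lemma col_perm_base_vec (s : 'S_d.+1) a b c :
  s a = inord 0 -> s b = inord 1 -> s c = inord 2 ->
  col_perm s (base_vec R d) = xvec R ([set a; b], c).
Proof.
move=> sa sb sc; apply/rowP => j; rewrite !mxE !inE /=.
rewrite -!(inj_eq (@perm_inj _ s) j) sa sb sc !eq_inord //.
by case: (s j) => [[|[|[|m]]] lt_m] /=; rewrite ?subr0 ?sub0r.
Qed.

Lemma Xvecs_perm : perm_eq (Xvecs R d) [seq xvec R p | p <- enum (Xpairs d.+1)].
Proof.
have i012_uniq : uniq [:: inord 0; inord 1; inord 2 : 'I_d.+1].
  by rewrite /= !inE !inord_eq_inord.
apply: uniq_perm; first exact: undup_uniq.
  by rewrite map_inj_in_uniq ?enum_uniq // => p q; rewrite !mem_enum; apply: xvec_inj.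
move=> x; rewrite mem_undup; apply/mapP/mapP => [[s _ ->] | [[A c]]].
  exists ([set s^-1 (inord 0); s^-1 (inord 1)], s^-1 (inord 2))%g.
    by rewrite mem_enum !inE /= cards2 !(inj_eq perm_inj) !inord_eq_inord.
  by apply: col_perm_base_vec; rewrite permKV.
rewrite mem_enum inE /= => /andP[/cards2P[a [b [ab ->]]] cab] ->.
have abc_uniq : uniq [:: a; b; c].
  by move: cab; rewrite /= !inE !negb_or ab andbT ![c == _]eq_sym.
have [s [sa sb sc]] := perm_of_uniq_tuples (t := [tuple a; b; c]) abc_uniq i012_uniq.
exists s; first by rewrite mem_enum inE.
by rewrite (col_perm_base_vec sa sb sc).
Qed.

Lemma sum_Xvecs x : x \in Xvecs R d -> \sum_i x 0 i = 1.
Proof.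
rewrite (perm_mem Xvecs_perm) => /mapP[p]; rewrite mem_enum inE => /andP[/eqP p2 _] ->.
by rewrite sum_xvec p2; lra.
Qed.

Lemma size_Xvecs : size (Xvecs R d) = ('C(d.+1, 2) * (d - 1))%N.
Proof. by rewrite (perm_size Xvecs_perm) size_map -cardE card_Xpairs. Qed.

End BaseVectorOrbit.

Lemma xdot_realized d k : (4 <= d)%N -> k \in xdot_values ->
  exists2 p, p \in Xpairs d.+1 & exists2 q, q \in Xpairs d.+1 & xdot p q = k.
Proof.
move=> d_ge4 k_val; pose i m : 'I_d.+1 := inord m.
have eq_i m l : (m <= 4)%N -> (l <= 4)%N -> (i m == i l) = (m == l).
  by move=> le_m4 le_l4; apply: inord_eq_inord; apply: leq_trans d_ge4.
exists ([set i 0; i 1], i 2); first by rewrite inE /= cards2 !inE !eq_i.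
move: k_val; rewrite !inE => /or4P[| | | /orP[|]] /eqP->;
  [exists ([set i 2; i 3], i 0) | exists ([set i 3; i 4], i 0)
  | exists ([set i 0; i 3], i 1) | exists ([set i 3; i 4], i 2)
  | exists ([set i 0; i 3], i 2)];
  by rewrite ?inE /= ?cards2 /xdot /= ?card_set2I ?eq_i // !inE !eq_i.
Qed.

Definition xdists (R : realType) : seq R :=
  [seq Num.sqrt (6 - 2 * k%:~R) | k <- xdot_values].

Lemma xdists_uniq (R : realType) : uniq (xdists R).
Proof.
have ge0 k : k \in xdot_values -> 0 <= 6 - 2 * k%:~R :> R.
  move=> k_val; have : k%:~R <= 2%:~R :> R.
    by rewrite ler_int; move: k_val; rewrite !inE; lia.
  lra.
rewrite map_inj_in_uniq // => k l k_val l_val /eqP.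
by rewrite eqr_sqrt ?ge0 // => /eqP eq_kl; apply: (@intr_inj R); lra.
Qed.

Lemma dist_set_Xvecs (R : realType) d : (4 <= d)%N ->
  dist_set (Xvecs R d) =i xdists R.
Proof.
move=> d_ge4; have d_ge2 : (2 <= d)%N by apply: leq_trans d_ge4.
have memX := perm_mem (Xvecs_perm R d_ge2).
move=> z; apply/dist_setP/mapP => [[x [y [xX yX xy ->]]] | [k k_val ->]].
  move: xX yX xy; rewrite !memX => /mapP[p pX ->] /mapP[q qX ->] xpq.
  rewrite !mem_enum in pX qX; exists (xdot p q); last exact: edist_xvec.
  by apply: xdot_mem_values => //; apply: contra_neq xpq => ->.
have [p pX [q qX xdot_pq]] := xdot_realized d_ge4 k_val.
have neq_pq : p != q.
  by apply: contraTneq k_val => eq_pq; rewrite -xdot_pq -eq_pq xdot_diag.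
exists (xvec R p), (xvec R q); split; rewrite ?memX ?map_f ?mem_enum //.
  exact: contra_neq (xvec_inj pX qX) neq_pq.
by rewrite -xdot_pq edist_xvec.
Qed.

Theorem lemma2p2 (R : realType) (d : nat) (hd : (4 <= d)%N) :
  (forall x, x \in Xvecs R d -> \sum_(i < d.+1) x 0 i = 1)
  /\ size (dist_set (Xvecs R d)) = 5%N
  /\ size (Xvecs R d) = ((d - 1) * 'C(d.+1, 2))%N.
Proof.
have d_ge2 : (2 <= d)%N by apply: leq_trans hd.
split; first exact: sum_Xvecs.
split; last by rewrite (size_Xvecs R d_ge2) mulnC.
rewrite -[5%N]/(size (xdists R)); apply/perm_size/uniq_perm.
- exact: undup_uniq.
- exact: xdists_uniq.
- exact: dist_set_Xvecs.
Qed.
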